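(* Let $S$ be a nonempty set of places of $\mathbb{Q}$, let $F$ be a number field, and let $T=M_F(S)$. Then the restriction map $\rho:\mathcal J^*(\mathbb{Q},S)\to\mathcal J^*(F,T)$, $\rho(c)=c|_{\mathcal J(F,T)}$, is a vector space isomorphism.
   Context: All fields lie in a fixed algebraic closure $\overline{\mathbb{Q}}$. For a number field $F$, a nonempty set $S$ of places of $F$, and a finite extension $K$ of $F$, $M_K(S)$ denotes the set of places of $K$ dividing a place in $S$. Define $\mathcal J(F,S)=\{(K,v): K\supseteq F,\ [K:F]<\infty,\ v\in M_K(S)\}$. A map $c:\mathcal J(F,S)\to\mathbb{R}$ is consistent if $c(K,v)=\sum_{w\mid v}c(L,w)$ for all $(K,v)\in\mathcal J(F,S)$ and all finite extensions $L/K$, the sum running over places $w$ of $L$ dividing $v$. $\mathcal J^*(F,S)$ is the real vector space of consistent maps $\mathcal J(F,S)\to\mathbb{R}$ under pointwise addition and scalar multiplication. *)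

(* All fields are subfields of algC, MathComp's algebraic closure of Q
   (every element of algC is algebraic over Q). *)
From HB Require Import structures.
From mathcomp Require Import all_boot all_order all_algebra algC.
From mathcomp Require Import all_classical all_reals exp.
Set Implicit Arguments. Unset Strict Implicit. Unset Printing Implicit Defensive.
Import Order.TTheory GRing.Theory Num.Theory.
Local Open Scope classical_set_scope.
Local Open Scope ring_scope.

Section Places.
Variable R : realType.

Definition Qfield : set algC := [set x | x \in Crat].

Definition is_subfield (K : set algC) : Prop :=
  [/\ K 0, K 1,
      (forall x y, K x -> K y -> K (x - y)),
      (forall x y, K x -> K y -> K (x * y)) &
      (forall x, K x -> x != 0 -> K x^-1)].

Definition number_field (K : set algC) : Prop :=
  is_subfield K /\
  exists s : seq algC, (forall i, (i < size s)%N -> K s`_i) /\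
    forall x, K x -> exists r : seq algC,
      [/\ size r = size s, all (fun q => q \in Crat) r &
          x = \sum_(i < size s) r`_i * s`_i].

(* b is an absolute value on K (only the values on K matter). *)
Definition absval (K : set algC) (b : algC -> R) : Prop :=
  [/\ (forall x, K x -> 0 <= b x),
      (forall x, K x -> (b x = 0 <-> x = 0)),
      (forall x y, K x -> K y -> b (x * y) = b x * b y) &
      (forall x y, K x -> K y -> b (x + y) <= b x + b y)].

Definition nontrivial_abs (K : set algC) (b : algC -> R) : Prop :=
  exists x, K x /\ x != 0 /\ b x != 1.

Definition abs_equiv (K : set algC) (a b : algC -> R) : Prop :=
  exists s : R, 0 < s /\ forall x, K x -> b x = a x `^ s.

Definition is_place (K : set algC) (v : set (algC -> R)) : Prop :=
  exists a, [/\ absval K a, nontrivial_abs K a &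
    v = [set b | absval K b /\ abs_equiv K a b]].

(* For K ⊆ L, a place w of L place_divides (lies above) a place v of K iff
   the restriction to K of (a representative of) w lies in the class v. *)
Definition place_divides (w v : set (algC -> R)) : Prop := exists b, w b /\ v b.

Definition M_ (K : set algC) (S : set (set (algC -> R))) : set (set (algC -> R)) :=
  [set w | is_place K w /\ exists v, S v /\ place_divides w v].

Definition inJ (F : set algC) (S : set (set (algC -> R)))
    (p : set algC * set (algC -> R)) : Prop :=
  [/\ number_field p.1, F `<=` p.1 & M_ p.1 S p.2].

Definition JFS (F : set algC) (S : set (set (algC -> R))) :=
  {p : set algC * set (algC -> R) | inJ F S p}.

(* Extension by 0 of a map on J(F,S) to all pairs (only used on J). *)
Definition extJ F S (c : JFS F S -> R) (K : set algC) (w : set (algC -> R)) : R :=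
  match pselect (inJ F S (K, w)) with
  | left h => c (exist _ (K, w) h)
  | right _ => 0
  end.

Definition consistent F S (c : JFS F S -> R) : Prop :=
  forall (x : JFS F S) (L : set algC), number_field L -> (sval x).1 `<=` L ->
    c x = (\sum_(w \in [set w | is_place L w /\ place_divides w (sval x).2])
              extJ c L w)%R.

Definition rho_restrict (S : set (set (algC -> R))) (F : set algC)
    (c : JFS Qfield S -> R) : JFS F (M_ F S) -> R :=
  fun y => extJ c (sval y).1 (sval y).2.

End Places.

(* Consistency says that c (K, v) is the sum of c over the places above v in any
   finite extension of K, and any two number fields lie in a common one.  Hence c is
   determined by its values on fields containing F (injectivity), and a consistent d on
   J(F, T) extends by summing d over the places above v in a fixed extension of K
   containing F; the result does not depend on that extension because such sums are
   transitive in towers (surjectivity).  The sums are finite: m distinct places of N above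
   one place of Q give, by Artin's characterisation of equivalent absolute values and the
   weak approximation argument, m elements of N that are linearly independent over Q. *)
From HB Require Import structures.
From mathcomp Require Import all_boot all_order all_algebra algC.
From mathcomp Require Import all_classical all_reals exp.
From mathcomp Require Import topology normedtype sequences.
From mathcomp Require Import vector fieldext algnum lra.
Import Order.TTheory GRing.Theory Num.Theory numFieldNormedType.Exports.
Local Open Scope classical_set_scope.
Local Open Scope ring_scope.
Set Implicit Arguments. Unset Strict Implicit. Unset Printing Implicit Defensive.

Section Subfield.
Variable K : set algC.
Hypothesis hK : is_subfield K.

Lemma subfield0 : K 0. Proof. by case: hK. Qed.
Lemma subfield1 : K 1. Proof. by case: hK. Qed.
Lemma subfieldB x y : K x -> K y -> K (x - y). Proof. by case: hK => _ _ + _ _; apply. Qed.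
Lemma subfieldM x y : K x -> K y -> K (x * y). Proof. by case: hK => _ _ _ + _; apply. Qed.

Lemma subfieldV x : K x -> K x^-1.
Proof.
have [->|x_neq0] := eqVneq x 0; first by rewrite invr0.
by case: hK => _ _ _ _ + Kx; apply.
Qed.

Lemma subfieldN x : K x -> K (- x).
Proof. by rewrite -sub0r; apply: subfieldB subfield0. Qed.

Lemma subfieldD x y : K x -> K y -> K (x + y).
Proof. by move=> Kx Ky; rewrite -[y]opprK; apply/subfieldB/subfieldN. Qed.

Lemma subfield_div x y : K x -> K y -> K (x / y).
Proof. by move=> Kx Ky; apply/subfieldM/subfieldV. Qed.

Lemma subfieldX x n : K x -> K (x ^+ n).
Proof.
move=> Kx; elim: n => [|n IHn]; first by rewrite expr0; apply: subfield1.
by rewrite exprS; apply: subfieldM.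
Qed.

Lemma subfieldXz x (z : int) : K x -> K (x ^ z).
Proof.
move=> Kx; case: z => n; rewrite ?NegzE -?exprnN.
  exact: subfieldX.
exact/subfieldV/subfieldX.
Qed.

Lemma subfield_sum (I : Type) (r : seq I) (P : pred I) (F : I -> algC) :
  (forall i, P i -> K (F i)) -> K (\sum_(i <- r | P i) F i).
Proof.
move=> KF; elim/big_rec: _ => [|i x Pi Kx]; first exact: subfield0.
by apply: subfieldD => //; apply: KF.
Qed.

Lemma Qfield_sub : Qfield `<=` K.
Proof.
have Kint (z : int) : K z%:~R.
  have Knat n : K n%:R.
    by elim: n => [|n IHn]; [apply: subfield0|rewrite -addn1 natrD; apply/subfieldD/subfield1].
  by case: z => n; [|rewrite NegzE mulrNz; apply: subfieldN]; apply: Knat.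
move=> _ /CratP[q ->]; rewrite -[q]divq_num_den fmorph_div !rmorph_int.
exact: subfield_div.
Qed.

End Subfield.

Lemma Qfield_subfield : is_subfield Qfield.
Proof.
split; rewrite /Qfield /= ?rpred0 ?rpred1 //.
- by move=> x y Qx Qy; rewrite rpredB.
- by move=> x y Qx Qy; rewrite rpredM.
- by move=> x Qx _; rewrite rpredV.
Qed.

Section Absval.
Variable R : realType.
Variables (K : set algC) (b : algC -> R).
Hypotheses (hK : is_subfield K) (hb : absval K b).

Lemma absval_ge0 x : K x -> 0 <= b x. Proof. by case: hb => + _ _ _; apply. Qed.
Lemma absval_eq0 x : K x -> (b x = 0 <-> x = 0). Proof. by case: hb => _ + _ _; apply. Qed.
Lemma absvalM x y : K x -> K y -> b (x * y) = b x * b y.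
Proof. by case: hb => _ _ + _; apply. Qed.
Lemma ler_absvalD x y : K x -> K y -> b (x + y) <= b x + b y.
Proof. by case: hb => _ _ _; apply. Qed.

Lemma absval_gt0 x : K x -> x != 0 -> 0 < b x.
Proof.
move=> Kx x_neq0; rewrite lt_def absval_ge0 // andbT.
by apply: contra_neq x_neq0 => /(absval_eq0 Kx).
Qed.

Lemma absval0 : b 0 = 0. Proof. exact/(absval_eq0 (subfield0 hK)). Qed.

Lemma absval1 : b 1 = 1.
Proof.
have b1_gt0 := absval_gt0 (subfield1 hK) (oner_neq0 _).
by apply: (mulfI (lt0r_neq0 b1_gt0)); rewrite -absvalM ?mulr1 //; apply: subfield1.
Qed.

Lemma absvalN x : K x -> b (- x) = b x.
Proof.
have KN1 := subfieldN hK (subfield1 hK).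
have bN1 : b (-1) = 1.
  have : b (-1) ^+ 2 == 1 by rewrite expr2 -absvalM // mulrNN mulr1 absval1.
  rewrite sqrf_eq1 => /orP[/eqP //|/eqP bN1].
  by have := absval_ge0 KN1; rewrite bN1 ler0N1.
by move=> Kx; rewrite -mulN1r absvalM // bN1 mul1r.
Qed.

Lemma absvalV x : K x -> b x^-1 = (b x)^-1.
Proof.
move=> Kx; have [->|x_neq0] := eqVneq x 0; first by rewrite invr0 absval0 invr0.
have bx_neq0 := lt0r_neq0 (absval_gt0 Kx x_neq0).
apply: (mulfI bx_neq0).
by rewrite -absvalM ?divff ?absval1 //; apply: subfieldV.
Qed.

Lemma absval_div x y : K x -> K y -> b (x / y) = b x / b y.
Proof. by move=> Kx Ky; rewrite absvalM ?absvalV //; apply: subfieldV. Qed.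

Lemma absvalX x n : K x -> b (x ^+ n) = b x ^+ n.
Proof.
move=> Kx; elim: n => [|n IHn]; first by rewrite !expr0 absval1.
by rewrite !exprS absvalM ?IHn //; apply: subfieldX.
Qed.

Lemma absvalXz x (z : int) : K x -> b (x ^ z) = b x ^ z.
Proof.
move=> Kx; case: z => n; first exact: absvalX.
by rewrite NegzE -!exprnN absvalV ?absvalX //; apply: subfieldX.
Qed.

Lemma ler_absval_dist x y : K x -> K y -> `|b x - b y| <= b (x - y).
Proof.
have le_absvalB u v : K u -> K v -> b u - b v <= b (u - v).
  move=> Ku Kv; rewrite lerBlDr -{1}(subrK v u).
  by apply: ler_absvalD => //; apply: subfieldB.
move=> Kx Ky; rewrite ler_norml le_absvalB // andbT lerNl opprB.
by rewrite -[x - y]opprB absvalN ?le_absvalB //; apply: subfieldB.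
Qed.

Lemma ler_absval_sum (I : Type) (r : seq I) (P : pred I) (F : I -> algC) :
  (forall i, P i -> K (F i)) -> b (\sum_(i <- r | P i) F i) <= \sum_(i <- r | P i) b (F i).
Proof.
move=> KF; elim: r => [|i r IHr]; first by rewrite !big_nil absval0.
rewrite !big_cons; case: ifP => // Pi.
apply: le_trans (ler_absvalD (KF i Pi) (subfield_sum hK r KF)) _.
by rewrite lerD2l.
Qed.

End Absval.

Section Places.
Variable R : realType.
Implicit Types (K L N : set algC) (a b : algC -> R) (u v w : set (algC -> R)).

Lemma absval_subset K L b : K `<=` L -> absval L b -> absval K b.
Proof.
move=> KL [b_ge0 b_eq0 bM bD]; split=> [x|x|x y|x y] *;
  [apply: b_ge0|apply: b_eq0|apply: bM|apply: bD]; exact: KL.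
Qed.

Lemma abs_equiv_subset K L a b : K `<=` L -> abs_equiv L a b -> abs_equiv K a b.
Proof. by move=> KL [s [s_gt0 abs]]; exists s; split=> // x /KL/abs. Qed.

Lemma nontrivial_abs_subset K L b : K `<=` L -> nontrivial_abs K b -> nontrivial_abs L b.
Proof. by move=> KL [x [/KL Lx bx]]; exists x. Qed.

Lemma abs_equiv_refl K a : absval K a -> abs_equiv K a a.
Proof. by move=> ha; exists 1; split=> // x Kx; rewrite powRr1 // (absval_ge0 ha). Qed.

Lemma abs_equiv_sym K a b : absval K a -> abs_equiv K a b -> abs_equiv K b a.
Proof.
move=> ha [s [s_gt0 abs]]; exists s^-1; split; first by rewrite invr_gt0.
by move=> x Kx; rewrite abs // -powRrM divff ?gt_eqF // powRr1 // (absval_ge0 ha).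
Qed.

Lemma abs_equiv_trans K a b c : abs_equiv K a b -> abs_equiv K b c -> abs_equiv K a c.
Proof.
move=> [s [s_gt0 abs]] [t [t_gt0 bct]]; exists (s * t); split; first exact: mulr_gt0.
by move=> x Kx; rewrite bct // abs // powRrM.
Qed.

Lemma nontrivial_abs_equiv K a b : absval K a -> abs_equiv K a b ->
  nontrivial_abs K a -> nontrivial_abs K b.
Proof.
move=> ha [s [s_gt0 abs]] [x [Kx [x_neq0 ax_neq1]]]; exists x; split=> //; split=> //.
by rewrite abs // powR_eq1 (negbTE ax_neq1) (gt_eqF s_gt0) orbF -leNgt (absval_ge0 ha).
Qed.

Definition place_of K b := [set b' | absval K b' /\ abs_equiv K b b'].

Lemma place_ofP K b : absval K b -> nontrivial_abs K b ->
  is_place K (place_of K b) /\ place_of K b b.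
Proof. by move=> hb b_nontriv; split; [exists b|split=> //; apply: abs_equiv_refl]. Qed.

Lemma place_absval K v b : is_place K v -> v b -> absval K b.
Proof. by move=> [a [_ _ ->]] []. Qed.

Lemma place_nontrivial K v b : is_place K v -> v b -> nontrivial_abs K b.
Proof. by move=> [a [ha a_nontriv ->]] [_ ab]; apply: nontrivial_abs_equiv ab a_nontriv. Qed.

Lemma place_equiv K v b1 b2 : is_place K v -> v b1 -> v b2 -> abs_equiv K b1 b2.
Proof.
by move=> [a [ha _ ->]] [_ ab1] [_ ab2]; apply: abs_equiv_trans ab2; apply: abs_equiv_sym.
Qed.

Lemma place_equiv_mem K v b1 b2 : is_place K v -> v b1 -> absval K b2 ->
  abs_equiv K b1 b2 -> v b2.
Proof. by move=> [a [ha _ ->]] [_ ab1] hb2 b12; split=> //; apply: abs_equiv_trans b12. Qed.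

Lemma place_eq K v1 v2 b1 b2 : is_place K v1 -> is_place K v2 -> v1 b1 -> v2 b2 ->
  abs_equiv K b1 b2 -> v1 = v2.
Proof.
move=> pv1 pv2 v1b1 v2b2 b12; apply/seteqP; split=> b hb.
- apply: place_equiv_mem pv2 v2b2 (place_absval pv1 hb) _.
  apply: abs_equiv_trans (place_equiv pv1 v1b1 hb).
  exact: abs_equiv_sym (place_absval pv1 v1b1) b12.
- apply: place_equiv_mem pv1 v1b1 (place_absval pv2 hb) _.
  exact: abs_equiv_trans b12 (place_equiv pv2 v2b2 hb).
Qed.

Lemma place_divides_tower K L N u v w : K `<=` L -> L `<=` N ->
  is_place N w -> is_place L u -> is_place K v -> place_divides w u ->
  place_divides w v <-> place_divides u v.
Proof.
move=> KL LN pw pu pv [b [wb ub]]; have hbK := absval_subset KL (place_absval pu ub).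
split=> [[b' [wb' vb']]|[b' [ub' vb']]]; exists b; split=> //;
  apply: place_equiv_mem pv vb' hbK _.
- exact: abs_equiv_subset (subset_trans KL LN) (place_equiv pw wb' wb).
- exact: abs_equiv_subset KL (place_equiv pu ub' ub).
Qed.

Lemma place_restrict K L N v w : K `<=` L -> L `<=` N ->
  is_place N w -> is_place K v -> place_divides w v ->
  exists u, [/\ is_place L u, place_divides w u & place_divides u v].
Proof.
move=> KL LN pw pv [b [wb vb]].
have hb := absval_subset LN (place_absval pw wb).
have [pu ub] := place_ofP hb (nontrivial_abs_subset KL (place_nontrivial pv vb)).
by exists (place_of L b); split=> //; exists b.
Qed.

Lemma place_restrict_unique L N w u1 u2 : L `<=` N ->
  is_place N w -> is_place L u1 -> is_place L u2 ->
  place_divides w u1 -> place_divides w u2 -> u1 = u2.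
Proof.
move=> LN pw pu1 pu2 [b1 [wb1 ub1]] [b2 [wb2 ub2]].
exact: place_eq pu1 pu2 ub1 ub2 (abs_equiv_subset LN (place_equiv pw wb1 wb2)).
Qed.

End Places.

Lemma ratio_eq_of_int_lt (R : realType) (u1 l1 u2 l2 : R) : 0 < l1 -> 0 < l2 ->
  (forall p q : int, q%:~R * u1 < p%:~R * l1 -> q%:~R * u2 < p%:~R * l2) ->
  u1 / l1 = u2 / l2.
Proof.
move=> l1_gt0 l2_gt0 lt12.
have lt12N p q : p%:~R * l1 < q%:~R * u1 -> p%:~R * l2 < q%:~R * u2.
  by move=> h; have := lt12 (- p) (- q); rewrite !mulrNz !mulNr !ltrN2; apply.
have lt_frac (x l : R) (r : rat) : 0 < l ->
    (x / l < ratr r) = ((denq r)%:~R * x < (numq r)%:~R * l) /\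
    (ratr r < x / l) = ((numq r)%:~R * l < (denq r)%:~R * x).
  move=> l_gt0; have d_gt0 : 0 < (denq r)%:~R :> R by rewrite ltr0z denq_gt0.
  rewrite /ratr ltr_pdivrMr // ltr_pdivlMr // mulrAC.
  by rewrite ltr_pdivlMr // ltr_pdivrMr // [x * _]mulrC.
apply/eqP; rewrite eq_le !leNgt; apply/andP; split; apply/negP => lt;
  have [r] := rat_in_itvoo lt; rewrite in_itv /= => /andP[lo hi].
- move: lo hi; rewrite (lt_frac _ _ _ l2_gt0).1 (lt_frac _ _ _ l1_gt0).2 => lo /lt12N.
  by rewrite ltNge (ltW lo).
- move: lo hi; rewrite (lt_frac _ _ _ l1_gt0).1 (lt_frac _ _ _ l2_gt0).2 => /lt12 lo.
  by rewrite ltNge (ltW lo).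
Qed.

Section Independence.
Variable R : realType.
Variable L : set algC.
Hypothesis hL : is_subfield L.
Implicit Types (b : algC -> R).

Lemma nontrivial_abs_gt1 b : absval L b -> nontrivial_abs L b -> exists y, L y /\ 1 < b y.
Proof.
move=> hb [x [Lx [x_neq0 bx_neq1]]].
have [bx_lt1|bx_ge1] := ltP (b x) 1; last by exists x; rewrite lt_neqAle eq_sym bx_neq1.
exists x^-1; split; first exact: subfieldV.
by rewrite (absvalV hL hb Lx) invf_gt1 // (absval_gt0 hb Lx).
Qed.

Lemma abs_equiv_of_lt1 b1 b2 : absval L b1 -> absval L b2 -> nontrivial_abs L b1 ->
  (forall x, L x -> b1 x < 1 -> b2 x < 1) -> abs_equiv L b1 b2.
Proof.
move=> hb1 hb2 b1_nontriv lt1.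
have [y [Ly b1y_gt1]] := nontrivial_abs_gt1 hb1 b1_nontriv.
have y_neq0 : y != 0 by apply: contraTneq b1y_gt1 => ->; rewrite (absval0 hL hb1) ltr10.
have b2y_gt1 : 1 < b2 y.
  have := lt1 (y^-1); rewrite (absvalV hL hb1 Ly) (absvalV hL hb2 Ly).
  by rewrite !invf_lt1 ?(absval_gt0 _ Ly) //; apply; first exact: subfieldV.
pose lnb b x := ln (b x).
have lnb_gt0 b : 1 < b y -> 0 < lnb b y by apply: ln_gt0.
exists (lnb b2 y / lnb b1 y); split; first by rewrite divr_gt0 ?lnb_gt0.
move=> x Lx; have [->|x_neq0] := eqVneq x 0.
  by rewrite (absval0 hL hb1) (absval0 hL hb2) powR0 // gt_eqF // divr_gt0 ?lnb_gt0.
have lnb_pow b (p q : int) : absval L b ->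
    lnb b (x ^ q / y ^ p) = q%:~R * lnb b x - p%:~R * lnb b y.
  move=> hb; have bx_gt0 := absval_gt0 hb Lx x_neq0.
  have by_gt0 := absval_gt0 hb Ly y_neq0.
  rewrite /lnb (absval_div hL hb (subfieldXz hL q Lx) (subfieldXz hL p Ly)).
  rewrite (absvalXz hL hb q Lx) (absvalXz hL hb p Ly).
  by rewrite ln_div ?posrE ?exprz_gt0 // -!powR_intmul ?ltW // !ln_powR.
have ratio : lnb b1 x / lnb b1 y = lnb b2 x / lnb b2 y.
  apply: ratio_eq_of_int_lt => [||p q]; try exact: lnb_gt0.
  have Le := subfield_div hL (subfieldXz hL q Lx) (subfieldXz hL p Ly).
  have e_neq0 : x ^ q / y ^ p != 0 by rewrite mulf_neq0 ?invr_eq0 ?expfz_neq0.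
  have lnb_lt0 b : absval L b -> (lnb b (x ^ q / y ^ p) < 0) = (b (x ^ q / y ^ p) < 1).
    by move=> hb; rewrite /lnb -ln1 ltr_ln ?posrE ?(absval_gt0 hb).
  rewrite -subr_lt0 -(lnb_pow b1) // lnb_lt0 // => /(lt1 _ Le).
  by rewrite -lnb_lt0 // lnb_pow // subr_lt0.
rewrite /powR gt_eqF ?(absval_gt0 hb1) // -[LHS]lnK ?posrE ?(absval_gt0 hb2) //.
congr expR; rewrite [RHS]mulrC mulrA mulrAC -/(lnb b1 x) ratio divfK //.
exact/lt0r_neq0/lnb_gt0.
Qed.

Lemma absval_separate b1 b2 : absval L b1 -> absval L b2 ->
  nontrivial_abs L b1 -> nontrivial_abs L b2 -> ~ abs_equiv L b1 b2 ->
  exists x, [/\ L x, 1 < b1 x & b2 x < 1].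
Proof.
move=> hb1 hb2 b1_nontriv b2_nontriv b12.
have witness b b' : absval L b -> absval L b' -> nontrivial_abs L b -> ~ abs_equiv L b b' ->
    exists x, [/\ L x, b x < 1 & 1 <= b' x].
  move=> hb hb' b_nontriv bb'; apply: contra_notP bb' => no_x.
  apply: abs_equiv_of_lt1 => // x Lx bx_lt1; rewrite ltNge; apply/negP => b'x_ge1.
  by apply: no_x; exists x.
have [x [Lx b1x_lt1 b2x_ge1]] := witness _ _ hb1 hb2 b1_nontriv b12.
have [y [Ly b2y_lt1 b1y_ge1]] : exists y, [/\ L y, b2 y < 1 & 1 <= b1 y].
  by apply: witness => // /(abs_equiv_sym hb2); apply: b12.
have x_neq0 : x != 0 by apply: contraTneq b2x_ge1 => ->; rewrite (absval0 hL hb2) ler10.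
exists (y / x); split; first exact: subfield_div.
- rewrite (absval_div hL hb1) // ltr_pdivlMr ?(absval_gt0 hb1) // mul1r.
  exact: lt_le_trans b1x_lt1 b1y_ge1.
- rewrite (absval_div hL hb2) // ltr_pdivrMr ?(absval_gt0 hb2) // mul1r.
  exact: lt_le_trans b2y_lt1 b2x_ge1.
Qed.

End Independence.

Section Approximation.
Variable R : realType.
Variable L : set algC.
Hypothesis hL : is_subfield L.
Implicit Types (b : algC -> R).

Lemma absvalX_cvg0 b z : absval L b -> L z -> b z < 1 -> b (z ^+ r) @[r --> \oo] --> (0 : R).
Proof.
move=> hb Lz bz_lt1; under eq_fun do rewrite (absvalX hL hb _ Lz).
by apply: cvg_expr; rewrite ger0_norm // (absval_ge0 hb).
Qed.

Lemma absvalMX_cvg0 b y z : absval L b -> L y -> L z -> b z < 1 ->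
  b (y * z ^+ r) @[r --> \oo] --> (0 : R).
Proof.
move=> hb Ly Lz bz_lt1; under eq_fun do rewrite (absvalM hb Ly (subfieldX hL _ Lz)).
by rewrite -(mulr0 (b y)); apply: cvgMl_tmp; apply: absvalX_cvg0.
Qed.

Lemma absval_1D_cvg1 b (u : nat -> algC) : absval L b -> (forall r, L (u r)) ->
  b (u r) @[r --> \oo] --> (0 : R) -> b (1 + u r) @[r --> \oo] --> (1 : R).
Proof.
move=> hb Lu /cvgrPdist_lt bu_cvg0; apply/cvgrPdist_lt => e e_gt0.
near=> r; rewrite distrC -(absval1 hL hb).
have L1u := subfieldD hL (subfield1 hL) (Lu r).
apply: le_lt_trans (ler_absval_dist hL hb L1u (subfield1 hL)) _.
rewrite addrC addKr -[b (u r)]ger0_norm ?(absval_ge0 hb) // -normrN -sub0r.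
by near: r; apply: bu_cvg0.
Unshelve. all: by end_near.
Qed.

Lemma absval_damp_cvg0 b y z : absval L b -> L y -> L z -> b z < 1 ->
  b (y * z ^+ r / (1 + z ^+ r)) @[r --> \oo] --> (0 : R).
Proof.
move=> hb Ly Lz bz_lt1; have Lzr r := subfieldX hL r Lz.
have L1zr r := subfieldD hL (subfield1 hL) (Lzr r).
under eq_fun do rewrite (absval_div hL hb (subfieldM hL Ly (Lzr _)) (L1zr _)).
rewrite -(mul0r (1 : R)^-1); apply: cvgM; first exact: absvalMX_cvg0.
apply: cvgV; first exact: oner_neq0.
by apply: (absval_1D_cvg1 hb Lzr); apply: absvalX_cvg0.
Qed.

Lemma absval_damp_cvg b y z : absval L b -> L y -> L z -> 1 < b z ->
  b (y * z ^+ r / (1 + z ^+ r)) @[r --> \oo] --> b y.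
Proof.
move=> hb Ly Lz bz_gt1; have Lz' := subfieldV hL Lz.
have z_neq0 : z != 0 by apply: contraTneq bz_gt1 => ->; rewrite (absval0 hL hb) ltr10.
have damp_inv r : y * z ^+ r / (1 + z ^+ r) = y / (1 + z^-1 ^+ r).
  have -> : 1 + z^-1 ^+ r = (z ^+ r)^-1 * (1 + z ^+ r).
    by rewrite mulrDr mulr1 mulVf ?expf_neq0 // exprVn addrC.
  by rewrite invfM invrK mulrA.
have L1z'r r := subfieldD hL (subfield1 hL) (subfieldX hL r Lz').
rewrite -[b y]divr1; under eq_fun do rewrite damp_inv (absval_div hL hb Ly (L1z'r _)).
apply: cvgMl_tmp; apply: cvgV; first exact: oner_neq0.
apply: (absval_1D_cvg1 hb (fun r => subfieldX hL r Lz')); apply: absvalX_cvg0 => //.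
by rewrite (absvalV hL hb Lz) invf_lt1 // (lt_trans ltr01 bz_gt1).
Qed.

Section Family.
Variables (I : finType) (b : I -> algC -> R) (i0 : I).
Hypothesis hb : forall i, absval L (b i).

Lemma near_all_lt1 (js : seq I) (f : nat -> algC) :
  (forall j, j \in js -> b j (f r) @[r --> \oo] --> (0 : R)) ->
  \forall r \near \oo, forall j, j \in js -> b j (f r) < 1.
Proof.
move=> bf_cvg0; apply: filter_forall => j.
have [jjs|_] := boolP (j \in js); last exact: nearW.
by near=> r => _; near: r; apply: (cvgr_lt _ (bf_cvg0 j jjs)); apply: ltr01.
Unshelve. all: by end_near.
Qed.

(* The inductive step uses [y * z ^+ r] when [b j z <= 1] and the damped
   [y * z ^+ r / (1 + z ^+ r)] otherwise, for [r] large. *)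
Lemma absval_approx (js : seq I) : (exists x, L x /\ 1 < b i0 x) ->
  (forall j, j \in js -> exists x, [/\ L x, 1 < b i0 x & b j x < 1]) ->
  exists x, [/\ L x, 1 < b i0 x & forall j, j \in js -> b j x < 1].
Proof.
move=> x0; elim: js => [|j js IHjs] sep; first by have [x [Lx bx]] := x0; exists x; split.
have [z [Lz bz_gt1 bjsz_lt1]] :
    exists z, [/\ L z, 1 < b i0 z & forall k, k \in js -> b k z < 1].
  by apply: IHjs => k kjs; apply: sep; rewrite in_cons kjs orbT.
have [y [Ly by_gt1 bjy_lt1]] := sep j (mem_head j js).
have Lzr r := subfieldX hL r Lz.
suff [x [Lx bx_gt1 bjx_lt1 bjsx_lt1]] :
    exists x, [/\ L x, 1 < b i0 x, b j x < 1 & forall k, k \in js -> b k x < 1].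
  by exists x; split=> // k; rewrite in_cons => /predU1P[->|]; last exact: bjsx_lt1.
have [bjz_le1|bjz_gt1] := leP (b j z) 1.
- have /filter_ex[r bjsr_lt1] := near_all_lt1 (f := fun r => y * z ^+ r)
    (fun k kjs => absvalMX_cvg0 (hb k) Ly Lz (bjsz_lt1 k kjs)).
  have bMX i : b i (y * z ^+ r) = b i y * b i z ^+ r.
    by rewrite (absvalM (hb i) Ly (Lzr r)) (absvalX hL (hb i) _ Lz).
  exists (y * z ^+ r); split=> //; first exact: subfieldM.
  + rewrite bMX; apply: lt_le_trans by_gt1 _.
    by rewrite ler_peMr ?exprn_ege1 ?(absval_ge0 (hb i0)) ?ltW.
  + rewrite bMX; apply: le_lt_trans bjy_lt1.
    by rewrite ler_piMr ?exprn_ile1 ?(absval_ge0 (hb j)).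
- pose x r := y * z ^+ r / (1 + z ^+ r).
  have Lx r : L (x r).
    exact: (subfield_div hL (subfieldM hL Ly (Lzr r)) (subfieldD hL (subfield1 hL) (Lzr r))).
  suff /filter_ex[r [? ? ?]] : \forall r \near \oo,
      [/\ 1 < b i0 (x r), b j (x r) < 1 & forall k, k \in js -> b k (x r) < 1].
    by exists (x r).
  near=> r; split; near: r.
  + by apply: (cvgr_gt _ (absval_damp_cvg (hb i0) Ly Lz bz_gt1)).
  + by apply: (cvgr_lt _ (absval_damp_cvg (hb j) Ly Lz bjz_gt1)).
  + exact: near_all_lt1 (fun k kjs => absval_damp_cvg0 (hb k) Ly Lz (bjsz_lt1 k kjs)).
Unshelve. all: by end_near.
Qed.

End Family.
End Approximation.

Lemma absval_dominant (R : realType) (L : set algC) (I : finType)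
    (b : I -> algC -> R) (e : R) :
  is_subfield L -> 0 < e -> (forall i, absval L (b i)) -> (forall i, nontrivial_abs L (b i)) ->
  (forall i j, i != j -> ~ abs_equiv L (b i) (b j)) ->
  exists w : I -> algC,
    forall i, [/\ L (w i), 1 <= b i (w i) & forall j, j != i -> b j (w i) < e].
Proof.
move=> hL e_gt0 hb b_nontriv b_ineq.
have /choice[x hx] i :
    exists x, [/\ L x, 1 < b i x & forall j, j \in enum (predC1 i) -> b j x < 1].
  apply: absval_approx => // [|j]; first exact: nontrivial_abs_gt1.
  rewrite mem_enum => /= ji; apply: absval_separate => //.
  by apply: b_ineq; rewrite eq_sym.
have /filter_ex[r hr] : \forall r \near \oo, forall i j, j != i -> b j (x i ^+ r) < e.
  apply: filter_forall => i; apply: filter_forall => j.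
  have [->|ji] := eqVneq j i; first by apply: nearW.
  have [Lx _ bx_lt1] := hx i; near=> r => _; near: r.
  apply: (cvgr_lt _ (absvalX_cvg0 hL (hb j) Lx (bx_lt1 j _))) => //.
  by rewrite mem_enum.
exists (fun i => x i ^+ r) => i; have [Lx bx_gt1 _] := hx i; split.
- exact: subfieldX.
- by rewrite (absvalX hL (hb i) _ Lx) exprn_ege1 // ltW.
- exact: hr.
Unshelve. all: by end_near.
Qed.

Definition Crat_span (s : seq algC) : set algC :=
  [set x | exists r : seq algC, [/\ size r = size s, all (fun q => q \in Crat) r &
    x = \sum_(i < size s) r`_i * s`_i]].

Lemma Crat_span_dep (s : seq algC) m (w : 'I_m -> algC) :
  (size s < m)%N -> (forall i, Crat_span s (w i)) ->
  exists q : 'I_m -> algC,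
    [/\ forall i, q i \in Crat, exists i, q i != 0 & \sum_i q i * w i = 0].
Proof.
move=> s_lt_m /choice[r hr].
pose M : 'M[rat]_(m, size s) := \matrix_(i, j) getCrat (r i)`_j.
have rM i (j : 'I_(size s)) : (r i)`_j = ratr (M i j).
  have [size_ri /all_nthP Crat_ri _] := hr i.
  by rewrite mxE getCratK // Crat_ri // size_ri.
have : kermx M != 0.
  rewrite kermx_eq0 /row_free; apply: contraTneq s_lt_m => <-.
  by rewrite -leqNgt rank_leq_col.
case/matrix0Pn => i [j uij_neq0]; pose u := row i (kermx M).
have uM : u *m M = 0 by rewrite -row_mul mulmx_ker row0.
exists (fun k => ratr (u 0 k)); split.
- by move=> k; apply: Crat_rat.
- by exists j; rewrite fmorph_eq0 mxE.
under eq_bigr => k _ do have [_ _ ->] := hr k.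
under eq_bigr => k _ do rewrite mulr_sumr.
rewrite exchange_big big1 //= => l _.
under eq_bigr => k _ do rewrite rM mulrA -rmorphM.
have /= := congr1 (fun A : 'rV_(size s) => A 0 l) uM; rewrite !mxE => uM0l.
by rewrite -mulr_suml -rmorph_sum uM0l rmorph0 mul0r.
Qed.

(* [k] maximises [a (q i)], hence every [b k (q i)]; the term [q k * w k] then
   outweighs the sum of all the others at [b k]. *)
Lemma dominant_Crat_free (R : realType) (N : set algC) m (b : 'I_m -> algC -> R)
    (a : algC -> R) (w q : 'I_m -> algC) :
  is_subfield N -> (forall i, absval N (b i)) -> absval Qfield a ->
  (forall i, abs_equiv Qfield a (b i)) ->
  (forall i, N (w i)) -> (forall i, 1 <= b i (w i)) ->
  (forall i j, j != i -> b j (w i) < m%:R^-1) ->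
  (forall i, q i \in Crat) -> \sum_i q i * w i = 0 -> forall i, q i = 0.
Proof.
move=> hN hb ha ab Nw bw_ge1 bw_lt qQ q_rel i0; apply/eqP/contraT => qi0_neq0.
have Qq i : Qfield (q i) := qQ i.
have Nq i : N (q i) := Qfield_sub hN (Qq i).
have [k _ kmax] := @arg_maxP _ _ _ i0 predT (fun i => a (q i)) isT.
have qk_neq0 : q k != 0.
  apply: contraTneq (kmax i0 isT) => ->; rewrite (absval0 Qfield_subfield ha) -ltNge.
  by apply: (absval_gt0 ha (Qq i0)).
have [s [s_gt0 abk]] := ab k.
have bq_le i : b k (q i) <= b k (q k).
  rewrite (abk _ (Qq i)) (abk _ (Qq k)).
  have powR_le x y : 0 <= x -> x <= y -> x `^ s <= y `^ s.
    by move=> x_ge0 xy; apply: (ge0_ler_powR (ltW s_gt0)); rewrite ?nnegrE ?(le_trans x_ge0 xy).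
  by apply: powR_le; [apply: (absval_ge0 ha)|apply: kmax].
have bqk_gt0 : 0 < b k (q k) := absval_gt0 (hb k) (Nq k) qk_neq0.
have m_gt0 : 0 < m%:R :> R by rewrite ltr0n (leq_ltn_trans (leq0n k)).
have lower : b k (q k) <= b k (q k * w k).
  by rewrite (absvalM (hb k)) // ler_peMr ?(absval_ge0 (hb k)).
have upper : b k (q k * w k) <= \sum_(i | i != k) b k (q k) / m%:R.
  have -> : q k * w k = - \sum_(i | i != k) q i * w i.
    by apply/eqP; rewrite -addr_eq0; rewrite (bigD1 k) //= in q_rel; rewrite q_rel.
  have Nqw i : N (q i * w i) := subfieldM hN (Nq i) (Nw i).
  rewrite (absvalN hN (hb k)); last exact: subfield_sum.
  apply: le_trans (ler_absval_sum hN (hb k) _ (fun i _ => Nqw i)) _.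
  apply: ler_sum => j jk; rewrite (absvalM (hb k)) //.
  apply: ler_pM; rewrite ?(absval_ge0 (hb k)) ?bq_le //.
  by apply: ltW; apply: bw_lt; rewrite eq_sym.
have total : \sum_(i < m) b k (q k) / m%:R = b k (q k).
  by rewrite sumr_const card_ord -[_ *+ m]mulr_natr divfK ?lt0r_neq0.
rewrite (bigD1 k) //= in total.
have : 0 < b k (q k) / m%:R by rewrite divr_gt0.
lra.
Qed.

(* Distinct places above the class of [a] yield, via [absval_dominant], elements of [N]
   that are free over [Q]. *)
Lemma finite_places_extending (R : realType) (N : set algC) (a : algC -> R) :
  number_field N -> absval Qfield a ->
  finite_set [set w | is_place N w /\ exists b, w b /\ abs_equiv Qfield a b].
Proof.
move=> [hN [s [_ N_span]]] ha; set A := [set w | _]; apply: contrapT.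
move=> /infiniteP/pcard_leP[z]; have above n : A (z n) by exact: funS.
pose m := (size s).+1.
have pz (i : 'I_m) := (above i).1.
have /choice[b zb] (i : 'I_m) := (above i).2.
have hb i : absval N (b i) := place_absval (pz i) (zb i).1.
have b_nontriv i : nontrivial_abs N (b i) := place_nontrivial (pz i) (zb i).1.
have b_ineq i j : i != j -> ~ abs_equiv N (b i) (b j).
  move=> /eqP ij /(place_eq (pz i) (pz j) (zb i).1 (zb j).1) zij; apply: ij.
  by apply: val_inj; move: zij; apply: inj; rewrite in_setT.
have m_inv_gt0 : 0 < m%:R^-1 :> R by rewrite invr_gt0 ltr0n.
have [w hw] := absval_dominant hN m_inv_gt0 hb b_nontriv b_ineq.
have Nw i : N (w i) by case: (hw i).
have [q [qQ [i0 qi0_neq0] q_rel]] := Crat_span_dep (ltnSn (size s)) (fun i => N_span _ (Nw i)).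
move/eqP: qi0_neq0; apply.
apply: (dominant_Crat_free hN hb ha (fun i => (zb i).2) Nw _ _ qQ q_rel) => [i|i j];
  by case: (hw i) => // _ _; apply.
Qed.

Lemma subfield_range (F : fieldType) (f : {rmorphism F -> algC}) : is_subfield (range f).
Proof.
split.
- by exists 0; rewrite ?rmorph0.
- by exists 1; rewrite ?rmorph1.
- by move=> _ _ [x _ <-] [y _ <-]; exists (x - y); rewrite ?rmorphB.
- by move=> _ _ [x _ <-] [y _ <-]; exists (x * y); rewrite ?rmorphM.
- by move=> _ [x _ <-] _; exists x^-1; rewrite ?fmorphV.
Qed.

Lemma number_field_range (E : fieldExtType rat) (f : {rmorphism E -> algC}) :
  number_field (range f).
Proof.
split; first exact: subfield_range.
pose e := vbasis (fullv : {vspace E}); exists (map f e); split.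
  by move=> i; rewrite size_map => ie; rewrite (nth_map 0) //; exists e`_i.
move=> _ [x _ <-].
pose c : seq algC := [seq ratr (coord e i x) | i <- enum 'I_(\dim (fullv : {vspace E}))].
have size_c : size c = size e by rewrite size_map size_enum_ord size_tuple.
exists c; split; first by rewrite size_c size_map.
  by apply/allP => _ /mapP[i _ ->]; apply: Crat_rat.
rewrite {1}(coord_vbasis (memvf x)) rmorph_sum size_tuple; apply: eq_bigr => i _.
rewrite (nth_map i) ?size_enum_ord // nth_ord_enum (nth_map 0) ?size_tuple //.
by rewrite rmorphZ_num.
Qed.

Lemma Crat_span_sub (K : set algC) (s : seq algC) : is_subfield K ->
  (forall i, (i < size s)%N -> K s`_i) -> Crat_span s `<=` K.
Proof.
move=> hK Ks _ [r [size_r /all_nthP Crat_r ->]]; apply: (subfield_sum hK) => i _.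
apply: (subfieldM hK); last exact: Ks.
by apply: (Qfield_sub hK); apply: Crat_r; rewrite size_r.
Qed.

Lemma number_field_compositum (K1 K2 : set algC) : number_field K1 -> number_field K2 ->
  exists N, [/\ number_field N, K1 `<=` N & K2 `<=` N].
Proof.
move=> [_ [s1 [_ K1_span]]] [_ [s2 [_ K2_span]]].
have [E [f [t ft _]]] := num_field_exists (s1 ++ s2).
have fE i : (i < size (s1 ++ s2))%N -> range f (s1 ++ s2)`_i.
  by rewrite -ft size_map => it; rewrite (nth_map 0) //; exists t`_i.
have hN := subfield_range f.
exists (range f); split; first exact: number_field_range.
- apply: (subset_trans K1_span); apply: (Crat_span_sub hN) => i i_lt; have := fE i.
  by rewrite nth_cat i_lt size_cat; apply; apply: leq_trans i_lt (leq_addr _ _).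
- apply: (subset_trans K2_span); apply: (Crat_span_sub hN) => i i_lt.
  have := fE (size s1 + i); rewrite size_cat ltn_add2l => /(_ i_lt).
  by rewrite nth_cat ltnNge leq_addr addKn.
Qed.

Local Notation places_above N v := [set w | is_place N w /\ place_divides w v].

Section Tower.
Variable R : realType.
Implicit Types (K L N : set algC) (v : set (algC -> R)).

Lemma finite_places_above K N v : number_field N -> is_subfield K -> K `<=` N ->
  is_place K v -> finite_set (places_above N v).
Proof.
move=> nfN hK KN [a [ha _ ->]]; have QK := Qfield_sub hK.
apply: sub_finite_set (finite_places_extending nfN (absval_subset QK ha)).
move=> w [pw [b [wb [_ ab]]]]; split=> //.
by exists b; split=> //; apply: abs_equiv_subset QK ab.
Qed.

(* Every place of [N] above [v] lies above exactly one place of [L] above [v]. *)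
Lemma fsbig_places_above_tower K L N v (g : set (algC -> R) -> R) :
  is_subfield K -> number_field L -> number_field N -> K `<=` L -> L `<=` N ->
  is_place K v ->
  \sum_(u \in places_above L v) \sum_(w \in places_above N u) g w =
  \sum_(w \in places_above N v) g w.
Proof.
move=> hK nfL nfN KL LN pv; have KN := subset_trans KL LN.
have finL := finite_places_above nfL hK KL pv.
have finN := finite_places_above nfN hK KN pv.
pose h u w := if w \in places_above N u then g w else 0.
transitivity (\sum_(u \in places_above L v) \sum_(w \in places_above N v) h u w).
  apply: eq_fsbigr => u; rewrite in_setE => -[pu uv].
  rewrite -(fsbig_widen (places_above N u) (places_above N v) (h u)).
  - by apply: eq_fsbigr => w wu; rewrite /h wu.
  - move=> w [pw wu]; split=> //.
    exact: (place_divides_tower KL LN pw pu pv wu).2 uv.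
  - by move=> w [_ wNu] /=; rewrite /h ifN //; apply/negP; rewrite in_setE.
rewrite exchange_fsbig //.
apply: eq_fsbigr => w; rewrite in_setE => -[pw wv].
have [u0 [pu0 wu0 u0v]] := place_restrict KL LN pw pv wv.
rewrite (fsbigD1 u0) //= fsbig1 ?addr0 => [|u [[pu _] u_neq]].
  by rewrite /h ifT // in_setE.
rewrite /h ifN //; apply/negP; rewrite in_setE => -[_ wu].
exact/u_neq/(place_restrict_unique LN pw pu pu0).
Qed.

End Tower.

Lemma extJE (R : realType) F S (c : JFS F S -> R) K w (h : inJ F S (K, w)) :
  extJ c K w = c (exist _ (K, w) h).
Proof. by rewrite /extJ; case: pselect => [h'|//]; rewrite (Prop_irrelevance h' h). Qed.

Lemma inJ_above (R : realType) F (S : set (set (algC -> R))) K N v w :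
  (forall s, S s -> is_place F s) -> inJ F S (K, v) -> number_field N -> K `<=` N ->
  is_place N w -> place_divides w v -> inJ F S (N, w).
Proof.
move=> hS [nfK FK [pv [s [Ss vs]]]] nfN KN pw wv; split=> //; first exact: subset_trans KN.
split=> //; exists s; split=> //.
exact: (place_divides_tower FK KN pw pv (hS s Ss) wv).2 vs.
Qed.

Section Restriction.
Variable R : realType.
Variables (S : set (set (algC -> R))) (F : set algC).
Hypotheses (hS : forall v, S v -> is_place Qfield v) (nfF : number_field F).
Local Notation rho := (@rho_restrict R S F).

Lemma inJ_of_inJ_M L u : inJ F (M_ F S) (L, u) -> inJ Qfield S (L, u).
Proof.
move=> [nfL FL [pu [v' [[pv' [v [Sv v'v]]] uv']]]].
split=> //; first exact: Qfield_sub nfL.1.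
split=> //; exists v; split=> //.
exact: (place_divides_tower (Qfield_sub nfF.1) FL pu pv' (hS Sv) uv').2 v'v.
Qed.

Lemma inJ_M_of_inJ L u : number_field L -> F `<=` L -> inJ Qfield S (L, u) ->
  inJ F (M_ F S) (L, u).
Proof.
move=> nfL FL [_ _ [pu [v [Sv uv]]]].
have [v' [pv' uv' v'v]] := place_restrict (Qfield_sub nfF.1) FL pu (hS Sv) uv.
by split=> //; split=> //; exists v'; split=> //; split=> //; exists v.
Qed.

Lemma rho_restrict_consistent c : consistent c -> consistent (rho c).
Proof.
move=> cc [[K v] hKv] L nfL KL /=; have hQ := inJ_of_inJ_M hKv.
rewrite /rho_restrict /= (extJE c hQ) (cc (exist _ (K, v) hQ) L nfL KL) /=.
apply: eq_fsbigr => w; rewrite in_setE => -[pw wv].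
have [_ FK _] := hKv; have hQw := inJ_above hS hQ nfL KL pw wv.
by rewrite (extJE _ (inJ_M_of_inJ nfL (subset_trans FK KL) hQw)).
Qed.

Lemma rho_restrict_linear a c1 c2 :
  rho (fun x => a * c1 x + c2 x) = (fun y => a * rho c1 y + rho c2 y).
Proof.
apply/funext => y; rewrite /rho_restrict /extJ.
by case: pselect => // _; rewrite mulr0 addr0.
Qed.

Lemma rho_restrict_inj c1 c2 : consistent c1 -> consistent c2 ->
  rho c1 = rho c2 -> c1 = c2.
Proof.
move=> cc1 cc2 c12; apply/funext => -[[K v] hKv]; have [nfK _ _] := hKv.
have [N [nfN KN FN]] := number_field_compositum nfK nfF.
pose x : JFS Qfield S := exist _ (K, v) hKv.
rewrite (cc1 x N nfN KN) (cc2 x N nfN KN) /=; apply: eq_fsbigr => w.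
rewrite in_setE => -[pw wv]; have hQw := inJ_above hS hKv nfN KN pw wv.
have := congr1 (fun f => f (exist _ (N, w) (inJ_M_of_inJ nfN FN hQw))) c12.
by rewrite /rho_restrict /= !(extJE _ hQw).
Qed.

Section Extension.
Variables (d : JFS F (M_ F S) -> R) (M : set algC -> set algC).
Hypotheses (cd : consistent d)
  (hM : forall K, number_field K -> [/\ number_field (M K), K `<=` M K & F `<=` M K]).

Definition extend (x : JFS Qfield S) : R :=
  \sum_(w \in places_above (M (sval x).1) (sval x).2) extJ d (M (sval x).1) w.

Lemma extJ_consistent L w N : inJ F (M_ F S) (L, w) -> number_field N -> L `<=` N ->
  extJ d L w = \sum_(z \in places_above N w) extJ d N z.
Proof. by move=> hLw nfN LN; rewrite (extJE d hLw) (@cd (exist _ (L, w) hLw) N nfN LN). Qed.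

(* Both sides are computed in a common extension [N] of [M K] and [M L]. *)
Lemma extend_consistent : consistent extend.
Proof.
move=> [[K v] hKv] L nfL KL /=; have [nfK _ [pv _]] := hKv.
have [nfMK KMK FMK] := hM nfK; have [nfML LML FML] := hM nfL.
have [N [nfN MKN MLN]] := number_field_compositum nfMK nfML.
transitivity (\sum_(z \in places_above N v) extJ d N z).
  rewrite /extend /= -(fsbig_places_above_tower _ nfK.1 nfMK nfN KMK MKN pv).
  apply: eq_fsbigr => w; rewrite in_setE => -[pw wv]; apply: extJ_consistent => //.
  exact: inJ_M_of_inJ nfMK FMK (inJ_above hS hKv nfMK KMK pw wv).
rewrite -(fsbig_places_above_tower _ nfK.1 nfL nfN KL (subset_trans LML MLN) pv).
apply: eq_fsbigr => u; rewrite in_setE => -[pu uv]; have hLu := inJ_above hS hKv nfL KL pu uv.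
rewrite (extJE _ hLu) /extend /= -(fsbig_places_above_tower _ nfL.1 nfML nfN LML MLN pu).
apply: eq_fsbigr => w; rewrite in_setE => -[pw wu]; symmetry; apply: extJ_consistent => //.
exact: inJ_M_of_inJ nfML FML (inJ_above hS hLu nfML LML pw wu).
Qed.

Lemma rho_restrict_extend : rho extend = d.
Proof.
apply/funext => -[[L w] hLw]; have [nfL _ _] := hLw; have [nfML LML _] := hM nfL.
rewrite /rho_restrict /= (extJE _ (inJ_of_inJ_M hLw)) /extend /=.
by rewrite (@cd (exist _ (L, w) hLw) (M L) nfML LML).
Qed.

End Extension.
End Restriction.

Theorem theorem5p2 (R : realType) (S : set (set (algC -> R))) (F : set algC) :
  (forall v, S v -> is_place Qfield v) -> S !=set0 -> number_field F ->
  let rho := @rho_restrict R S F in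
  [/\ (* rho maps J*(Q,S) into J*(F,T), T = M_F(S) *)
      (forall c, consistent c -> consistent (rho c)),
      (* rho is linear *)
      (forall (a : R) (c1 c2 : JFS Qfield S -> R),
          rho (fun x => a * c1 x + c2 x) = (fun y => a * rho c1 y + rho c2 y)),
      (* injective on J*(Q,S) *)
      (forall c1 c2, consistent c1 -> consistent c2 -> rho c1 = rho c2 -> c1 = c2) &
      (* surjective onto J*(F,T) *)
      (forall d : JFS F (M_ F S) -> R, consistent d ->
          exists c, consistent c /\ rho c = d)].
Proof.
move=> hS _ nfF rho; split.
- exact: rho_restrict_consistent.
- exact: rho_restrict_linear.
- exact: rho_restrict_inj.
- move=> d cd.
  have /choice[M hM] K : exists N, number_field K -> [/\ number_field N, K `<=` N & F `<=` N].
    have [nfK|nfK_false] := pselect (number_field K); last by exists K => /nfK_false.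
    by have [N hN] := number_field_compositum nfK nfF; exists N.
  by exists (extend d M); split; [apply: extend_consistent|apply: rho_restrict_extend].
Qed.
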